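(* Let $H$ be a Hilbert space, $\ell\ge1$, and $\mathbf{b}=[b_1,\dots,b_\ell]^t$ with $b_j\in\mathcal{B}(H)$. Then $b_1,\dots,b_\ell$ are linearly independent if and only if there exist vectors $\xi_1,\dots,\xi_m\in H$ such that $\sum_{k=1}^mQ(\mathbf{b},\xi_k)$ is positive definite.
   Context: For $\xi\in H$, $Q(\mathbf{b},\xi)=(\langle b_i^*b_j\xi,\xi\rangle)_{i,j=1}^\ell=(\langle b_j\xi,b_i\xi\rangle)_{i,j=1}^\ell\in M_\ell(\mathbb{C})$. *)

(* Hilbert spaces over C = R[i] (R : realType), via the
   sesquilinear library's positive-definite hermitian forms {dot H for conjC}. *)
From HB Require Import structures.
From mathcomp Require Import all_boot all_order all_algebra.
From mathcomp Require Import complex reals.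
Set Implicit Arguments. Unset Strict Implicit. Unset Printing Implicit Defensive.
Import Order.TTheory GRing.Theory Num.Theory Num.Def.
Local Open Scope ring_scope.
Local Open Scope complex_scope.

Section Hilbert.
Variable R : realType.
Local Notation C := R[i].
Variable H : lmodType C.
(* inner product <x, y> = ip x y : linear in x, conjugate-linear in y,
   hermitian, and <x,x> > 0 for x <> 0 *)
Variable ip : {dot H for conjC}.

Definition hnorm (x : H) : C := sqrtC (ip x x).

Definition cauchy_seq (u : nat -> H) : Prop :=
  forall e : C, 0 < e -> exists N : nat, forall m n : nat,
    (N <= m)%N -> (N <= n)%N -> hnorm (u m - u n) < e.
Definition converges_to (u : nat -> H) (x : H) : Prop :=
  forall e : C, 0 < e -> exists N : nat, forall n : nat,
    (N <= n)%N -> hnorm (u n - x) < e.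
Definition hilbert_complete : Prop :=
  forall u : nat -> H, cauchy_seq u -> exists x : H, converges_to u x.

Definition bounded_op (b : {linear H -> H}) : Prop :=
  exists M : C, forall x : H, hnorm (b x) <= M * hnorm x.

Definition lin_indep_ops (l : nat) (b : 'I_l -> {linear H -> H}) : Prop :=
  forall c : 'I_l -> C,
    (forall x : H, \sum_(i < l) c i *: b i x = 0) -> forall i, c i = 0.

Definition Qmx (l : nat) (b : 'I_l -> {linear H -> H}) (xi : H) : 'M[C]_l :=
  \matrix_(i < l, j < l) ip (b j xi) (b i xi).
End Hilbert.

Definition posdef_mx (R : realType) (l : nat) (A : 'M[R[i]]_l) : Prop :=
  map_mx conjC (A^T) = A /\
  forall v : 'cV[R[i]]_l, v != 0 -> 0 < (map_mx conjC (v^T) *m A *m v) 0 0.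

(* Writing [lcomb u x] for [sum_j u_j b_j x], the quadratic form of
   [sum_k Q(b, xi_k)] at [v] is [sum_k ||lcomb v^T xi_k||^2], so the sum is
   positive definite exactly when no nonzero [u] has [lcomb u] vanishing at
   every [xi_k].  Independence says no nonzero [lcomb u] vanishes everywhere,
   so adding points where some surviving [lcomb u] is nonzero strictly lowers
   the dimension of the (finite-dimensional) space of such [u] until it is 0. *)

From HB Require Import structures.
From mathcomp Require Import all_boot all_order all_algebra.
From mathcomp Require Import complex reals.
From Stdlib Require Import Classical.
Set Implicit Arguments. Unset Strict Implicit. Unset Printing Implicit Defensive.
Import Order.TTheory GRing.Theory Num.Theory Num.Def.
Local Open Scope ring_scope.
Local Open Scope complex_scope.

Section Gram.
Variable R : realType.
Local Notation C := R[i].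
Variable H : lmodType C.
Variable ip : {dot H for conjC}.
Variable l : nat.
Variable b : 'I_l -> {linear H -> H}.

Definition lcomb (u : 'rV[C]_l) (x : H) : H := \sum_j u 0 j *: b j x.

Definition vanishes_on (u : 'rV[C]_l) (s : seq H) : bool :=
  all (fun x => lcomb u x == 0) s.

Definition gram (s : seq H) : 'M[C]_l := \sum_(x <- s) Qmx ip b x.

Lemma sum_dnorm_eq0 (I : eqType) (s : seq I) (f : I -> H) :
  (\sum_(x <- s) ip (f x) (f x) == 0) = all (fun x => f x == 0) s.
Proof.
rewrite psumr_eq0; last by move=> x _; apply: dnorm_ge0.
by apply: eq_all => x; rewrite dnorm_eq0.
Qed.

Lemma gram_herm s : map_mx conjC (gram s)^T = gram s.
Proof.
apply/matrixP => i j; rewrite !mxE !summxE rmorph_sum; apply: eq_bigr => x _.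
by rewrite !mxE (hermC ip (b j x)) /= expr0 mul1r.
Qed.

Lemma mul_row_gramT s u i :
  (u *m (gram s)^T) 0 i = \sum_(x <- s) ip (lcomb u x) (b i x).
Proof.
rewrite mxE; under eq_bigr => j _ do rewrite mxE summxE big_distrr.
rewrite exchange_big /=; apply: eq_bigr => x _.
rewrite /lcomb linear_sumlz; apply: eq_bigr => j _.
by rewrite mxE linearZl_LR.
Qed.

Lemma gram_quad_row s u :
  (u *m (gram s)^T *m (map_mx conjC u)^T) 0 0 =
  \sum_(x <- s) ip (lcomb u x) (lcomb u x).
Proof.
rewrite mxE; under eq_bigr => i _ do rewrite mul_row_gramT !mxE big_distrl.
rewrite exchange_big /=; apply: eq_bigr => x _.
rewrite {2}/lcomb linear_sumr; apply: eq_bigr => j _.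
by rewrite linearZr_LR /= mulrC.
Qed.

Lemma gram_quad s (v : 'cV[C]_l) :
  (map_mx conjC v^T *m gram s *m v) 0 0 =
  \sum_(x <- s) ip (lcomb v^T x) (lcomb v^T x).
Proof.
rewrite -gram_quad_row.
transitivity ((map_mx conjC v^T *m gram s *m v)^T 0 0).
  by rewrite [RHS]mxE.
by rewrite !trmx_mul mulmxA.
Qed.

Lemma sub_kermx_gram s u : (u <= kermx (gram s)^T)%MS = vanishes_on u s.
Proof.
rewrite sub_kermx /vanishes_on -sum_dnorm_eq0.
apply/idP/idP => [/eqP uM0 | Tu].
  by rewrite -gram_quad_row uM0 mul0mx mxE.
apply/eqP/rowP => i; rewrite mul_row_gramT mxE big_seq big1 // => x xs.
move: Tu; rewrite sum_dnorm_eq0 => /allP/(_ x xs)/eqP ->.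
exact: linear0l.
Qed.

Lemma kermx_gram_cons y s :
  (kermx (gram (y :: s))^T <= kermx (gram s)^T)%MS.
Proof.
apply/row_subP => k; rewrite sub_kermx_gram.
by have := row_sub k (kermx (gram (y :: s))^T); rewrite sub_kermx_gram => /andP[].
Qed.

Lemma posdef_gramP s :
  posdef_mx (gram s) <-> forall u, vanishes_on u s -> u = 0.
Proof.
split=> [[_ pos] u | sep].
  apply: contraTeq => u0; rewrite /vanishes_on -sum_dnorm_eq0.
  have v0 : u^T != 0 by rewrite trmx_eq0.
  by have := pos _ v0; rewrite gram_quad trmxK lt0r => /andP[].
split=> [|v v0]; first exact: gram_herm.
rewrite gram_quad lt0r sumr_ge0 ?andbT => [|x _]; last exact: dnorm_ge0.
rewrite sum_dnorm_eq0; apply: contra v0 => /sep/eqP.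
by rewrite trmx_eq0.
Qed.

Lemma exists_separating_seq :
  (forall u, (forall x, lcomb u x = 0) -> u = 0) ->
  exists s, forall u, vanishes_on u s -> u = 0.
Proof.
move=> indep.
suff: forall n s, \rank (kermx (gram s)^T) = n ->
    exists s, forall u, vanishes_on u s -> u = 0.
  by move/(_ _ [::] erefl).
elim/ltn_ind => n IH s rank_s.
have [[u /andP[us u0]] | no_u] :=
  classic (exists u, vanishes_on u s && (u != 0)); last first.
  by exists s => u us; apply/eqP/negPn/negP => u0; apply: no_u; exists u; rewrite us.
have [y uy] : exists y, lcomb u y != 0.
  apply: NNPP => none; move/eqP: u0; apply; apply: indep => x.
  by apply/eqP; apply: NNPP => ux; apply: none; exists x; apply/negP.
apply: (IH _ _ (y :: s) erefl); rewrite -rank_s; apply: rank_ltmx.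
rewrite ltmxE kermx_gram_cons /=; apply/negP => /(submx_trans (A := u)).
by rewrite !sub_kermx_gram /= (negbTE uy) us => /(_ isT).
Qed.

End Gram.

Theorem lemma1p11 (R : realType) (H : lmodType R[i])
    (ip : {dot H for conjC}) (Hcomplete : hilbert_complete ip)
    (l : nat) (hl : (1 <= l)%N) (b : 'I_l -> {linear H -> H})
    (hb : forall j, bounded_op ip (b j)) :
  lin_indep_ops b <->
  exists (m : nat) (xi : 'I_m -> H), posdef_mx (\sum_(k < m) Qmx ip b (xi k)).
Proof.
split=> [indep | [m [xi]]].
  have [s sep] : exists s, forall u, vanishes_on b u s -> u = 0.
    apply: (exists_separating_seq ip) => u Tu; apply/rowP => j.
    by rewrite (indep _ Tu) mxE.
  exists (size s), (fun k => nth 0 s k).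
  rewrite (_ : \sum_(k < _) _ = gram ip b s); first exact/posdef_gramP.
  by rewrite /gram (big_nth 0) big_mkord.
rewrite (_ : \sum_(k < m) _ = gram ip b [seq xi k | k <- index_enum 'I_m]);
  last by rewrite /gram big_map.
move=> /posdef_gramP sep c comb0 i.
have lcomb_c x : lcomb b (\row_j c j) x = 0.
  by rewrite -(comb0 x); apply: eq_bigr => j _; rewrite mxE.
have /rowP/(_ i) : \row_j c j = 0.
  by apply: sep; apply/allP => x _; rewrite lcomb_c.
by rewrite !mxE.
Qed.
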